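(* Let $r\in(0,1)$ and let $k\geq1$ be an integer. Let $W_1,W_2,\dots$ be i.i.d.\ copies of a positive random variable $W$ (an i.i.d.\ multiplicative cascade with scale ratio $r$) such that $\log W$ is infinitely divisible with L\'evy triplet $(a,\sigma^2,\nu)$, i.e.\ with cumulant generating function $$\psi(p)=\log\mathbb{E}[W^p]=ap+\frac{\sigma^2p^2}{2}+\int\bigl(e^{px}-1-px\,\mathbf{1}_{|x|\le1}\bigr)\,\nu(dx),$$ and define the scaling exponents $\zeta_p=\psi(p)/\ln r$ and incremental exponents $\delta_p=\zeta_{p+k}-\zeta_p=(\psi(p+k)-\psi(p))/\ln r$. Say that A1 holds with $\beta\in(0,1)$ if $\delta_\infty=\lim_{p\to\infty}\delta_p$ exists and is finite and $\delta_{p+k}=(1-\beta)\delta_\infty+\beta\delta_p$ for all $p\in k\mathbb{N}_0=\{0,k,2k,\dots\}$. Assume nontrivial intermittency, i.e.\ $C=(\delta_0-\delta_\infty)/(1-\beta)>0$. Then A1 holds with $\beta\in(0,1)$ if and only if $\sigma^2=0$ and $\nu=\lambda\delta_b$ (a point mass at $b$) for some $b<0$ and $\lambda>0$. That is, among cascades with log-infinitely-divisible generator, A1 selects exactly the log-Poisson class ($\log W=a'+bN$, $N\sim\mathrm{Poisson}(\lambda)$); no other log-infinitely-divisible cascade (log-normal, log-stable, or any other) satisfies A1.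
   Context: $\ln$ denotes the natural logarithm. The L\'evy measure $\nu$ has no atom at $0$. *)

From HB Require Import structures.
From mathcomp Require Import all_boot all_order all_algebra.
From mathcomp Require Import all_classical all_reals all_analysis.
Import Order.TTheory GRing.Theory Num.Theory.
Import numFieldNormedType.Exports.
Set Implicit Arguments. Unset Strict Implicit. Unset Printing Implicit Defensive.
Local Open Scope classical_set_scope.
Local Open Scope ring_scope.

Section LevyCascade.
Context {R : realType}.

Definition levy_integrand (p x : R) : R :=
  expR (p * x) - 1 - (if `|x| <= 1 then p * x else 0).

Definition is_levy_measure (nu : {measure set R -> \bar R}) : Prop :=
  nu [set 0] = 0%E /\ (\int[nu]_x (Num.min 1 (x ^+ 2))%:E < +oo)%E.

(* Cumulant generating function psi(p) = log E[W^p] given by the Levy triplet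
   (a, sigma2, nu) of log W. *)
Definition cgf (a sigma2 : R) (nu : {measure set R -> \bar R}) (p : R) : R :=
  a * p + sigma2 * p ^+ 2 / 2 + Rintegral nu setT (levy_integrand p).

Definition zeta (r a sigma2 : R) nu (p : R) : R := cgf a sigma2 nu p / ln r.

Definition incr_exp (r : R) (k : nat) (a sigma2 : R) nu (p : R) : R :=
  zeta r a sigma2 nu (p + k%:R) - zeta r a sigma2 nu p.

Definition A1 (r : R) (k : nat) (a sigma2 : R) nu (beta dinf : R) : Prop :=
  (incr_exp r k a sigma2 nu p @[p --> +oo] --> dinf) /\
  forall n : nat,
    incr_exp r k a sigma2 nu ((n * k)%N%:R + k%:R)
    = (1 - beta) * dinf + beta * incr_exp r k a sigma2 nu (n * k)%N%:R.

Definition intermittency_C (r : R) (k : nat) (a sigma2 : R) nu (beta dinf : R) : R :=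
  (incr_exp r k a sigma2 nu 0 - dinf) / (1 - beta).

End LevyCascade.

From HB Require Import structures.
From mathcomp Require Import all_boot all_order all_algebra.
From mathcomp Require Import all_classical all_reals all_analysis.
From mathcomp Require Import ring lra measurable_realfun.
Import Order.TTheory GRing.Theory Num.Theory.
Import numFieldNormedType.Exports.
Local Open Scope classical_set_scope.
Local Open Scope ring_scope.

(** Write K for k and psi_n for psi(nK), so that delta_(nK) = (psi_(n+1) - psi_n) / ln r.
  A1 says that delta_((n+1)K) - beta delta_(nK) does not depend on n, hence the
  difference operator (E - 1)^2 (E - beta)^2, E the shift n |-> n + 1, kills
  psi_n.  In the Levy-Khintchine formula this operator kills the part of psi
  that is affine in p, sends sigma^2 p^2 / 2 to sigma^2 K^2 (1 - beta)^2 and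
  e^(px) to ((e^(Kx) - 1) (e^(Kx) - beta))^2.  Both contributions are
  nonnegative and add up to 0, so sigma^2 = 0 and nu is carried by {0, b} with
  e^(Kb) = beta; since nu has no atom at 0, nu = lambda delta_b.  If lambda were
  0, delta_p would be constant and C = 0.  Conversely, for nu = lambda delta_b
  one computes delta_p = delta_oo + lambda (e^(Kb) - 1) e^(pb) / ln r, which
  satisfies A1 with beta = e^(Kb). *)

Section point_mass.
Context {d} {T : measurableType d} {R : realType}.
Variable mu : {measure set T -> \bar R}.
Context {b : T}.
Hypothesis mb : measurable [set b].

Lemma Rintegral_scaled_dirac lam :
  (forall A, measurable A -> mu A = (lam%:E * \d_b A)%E) ->
  forall f, measurable_fun setT f -> Rintegral mu setT f = lam * f b.
Proof.
move=> mu_dirac f mf.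
have mu_ae : {ae mu, forall x, x = b}.
  have mCb : measurable (~` [set b]) by exact: measurableC.
  exists (~` [set b]); split => //.
  by rewrite mu_dirac // diracE memNset ?mule0 //= => /(_ erefl).
rewrite /Rintegral (@ae_eq_integral _ _ _ mu setT (cst (f b)%:E) (EFin \o f)) //.
- by rewrite integral_cst // mu_dirac // diracE in_setT mule1 /= mulrC.
- exact/measurable_EFinP.
- by apply: filterS mu_ae => x ->.
Qed.

Lemma measure_ae_set1 : {ae mu, forall x, x = b} ->
  forall A, measurable A -> mu A = (mu [set b] * \d_b A)%E.
Proof.
move=> [N [mN N0 bN]] A mA.
have AbN : A `\` [set b] `<=` N by move=> x [_ /= xb]; exact: bN.
rewrite (measureDI mu mA mb) [X in (X + _)%E](_ : _ = 0%E) ?add0e ?diracE; last first.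
  by apply/eqP; rewrite eq_le measure_ge0 -N0 le_measure ?inE //; exact: measurableD.
have [/[!inE] Ab|Ab] := boolP (b \in A).
  by rewrite mule1; congr (mu _); apply/seteqP; split=> [x [] //|x /= ->].
rewrite mule0 (_ : A `&` _ = set0) ?measure0 //.
by apply/seteqP; split=> // x [Ax /= xb]; move: Ab; rewrite -xb (mem_set Ax).
Qed.

Lemma measure_set1_fin_num (f : T -> R) :
  mu.-integrable setT (EFin \o f) -> f b != 0 -> mu [set b] \is a fin_num.
Proof.
move=> /integrableP[mf ifoo] fb0.
have le_int : (`|f b|%:E * mu [set b] <= \int[mu]_x `|(f x)%:E|)%E.
  rewrite -integral_cst // (eq_integral (fun x => `|(f x)%:E|%E)); last first.
    by move=> x /[!inE] ->.
  by apply: ge0_subset_integral => //; exact: measurableT_comp.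
rewrite ge0_fin_numE ?measure_ge0 // ltey; apply/eqP => mub_oo.
move: le_int; rewrite mub_oo gt0_muley ?lte_fin ?normr_gt0 // leye_eq => /eqP.
by move: ifoo => /[swap] ->.
Qed.

End point_mass.

Lemma ae_eq0_Rintegral_ge0 {d} {T : measurableType d} {R : realType}
    (mu : {measure set T -> \bar R}) (f : T -> R) : (forall x, 0 <= f x) ->
  mu.-integrable setT (EFin \o f) -> Rintegral mu setT f = 0 ->
  {ae mu, forall x, f x = 0}.
Proof.
move=> f0 intf intf0.
have mf : measurable_fun setT (EFin \o f) by exact: measurable_int intf.
have /(ae_eq_integral_abs mu measurableT mf) : (\int[mu]_x `|(f x)%:E| = 0)%E.
  under eq_integral do rewrite gee0_abs ?lee_fin //.
  by rewrite -(fineK (integrable_fin_num measurableT intf)) -/(Rintegral _ _ _) intf0.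
by apply: filterS => x /(_ I) [].
Qed.

Section Rintegral_lincomb.
Context {d} {T : measurableType d} {R : realType}.
Context (mu : {measure set T -> \bar R}) {D : set T} {I : Type}.
Hypothesis mD : measurable D.
Context (c : I -> R) {f : I -> T -> R}.
Hypothesis intf : forall i, mu.-integrable D (EFin \o f i).

Lemma integrable_lincomb (s : seq I) :
  mu.-integrable D (EFin \o fun x => \sum_(i <- s) c i * f i x).
Proof.
elim: s => [|i s ih].
  by apply: eq_integrable (integrable0 mu D) => // x _; rewrite /= big_nil.
apply: eq_integrable (integrableD mD (integrableZl mD (c i) (intf i)) ih) => //.
by move=> x _; rewrite /= big_cons EFinD EFinM.
Qed.

Lemma Rintegral_lincomb (s : seq I) :
  Rintegral mu D (fun x => \sum_(i <- s) c i * f i x)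
  = \sum_(i <- s) c i * Rintegral mu D (f i).
Proof.
elim: s => [|i s ih].
  rewrite big_nil (@eq_Rintegral _ _ _ mu D (cst 0)) ?Rintegral_cst ?mul0r //.
  by move=> x _; rewrite big_nil.
under eq_Rintegral do rewrite big_cons.
rewrite big_cons -ih -RintegralZl // -RintegralD //; last exact: integrable_lincomb.
by apply: eq_integrable (integrableZl mD (c i) (intf i)).
Qed.
End Rintegral_lincomb.

Section annihilator.
Context {F : comPzRingType}.

(** The coefficients of ((X - 1) (X - be))^2: [annihilator be g] is
  ((E - 1) (E - be))^2 g evaluated at 0, where E g = g \o succn. *)
Definition annihilator_coef (be : F) (j : nat) : F :=
  [:: be ^+ 2; - (2 * be + 2 * be ^+ 2); 1 + 4 * be + be ^+ 2; - (2 + 2 * be); 1]`_j.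

Definition annihilator (be : F) (g : nat -> F) : F :=
  \sum_(j < 5) annihilator_coef be j * g j.

Lemma annihilatorE be g : annihilator be g =
  g 4%N - (2 + 2 * be) * g 3%N + (1 + 4 * be + be ^+ 2) * g 2%N
  - (2 * be + 2 * be ^+ 2) * g 1%N + be ^+ 2 * g 0%N.
Proof. rewrite /annihilator /annihilator_coef !big_ord_recr big_ord0 /=; ring. Qed.

Lemma annihilatorD be g h :
  annihilator be (fun j => g j + h j) = annihilator be g + annihilator be h.
Proof. by rewrite !annihilatorE; ring. Qed.

Lemma annihilator_geometric be t :
  annihilator be (fun j => t ^+ j) = ((t - 1) * (t - be)) ^+ 2.
Proof. by rewrite annihilatorE; ring. Qed.

Lemma annihilator_quadratic be c0 c1 c2 :
  annihilator be (fun j => c0 + c1 * j%:R + c2 * j%:R ^+ 2) = 2 * c2 * (1 - be) ^+ 2.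
Proof. by rewrite annihilatorE; ring. Qed.

End annihilator.

Lemma annihilator_affine_rec {F : fieldType} (be c dinf : F) (psi : nat -> F) : c != 0 ->
  (forall n, (psi n.+2 - psi n.+1) / c = (1 - be) * dinf + be * ((psi n.+1 - psi n) / c)) ->
  annihilator be psi = 0.
Proof.
move=> c0 rec; pose u n := (psi n.+1 - psi n) / c.
have -> : annihilator be psi =
    c * (u 3%N - (1 + 2 * be) * u 2%N + (2 * be + be ^+ 2) * u 1%N - be ^+ 2 * u 0%N).
  by rewrite annihilatorE /u; field.
by rewrite /u (rec 2%N) (rec 1%N) (rec 0%N); ring.
Qed.

Section levy_cascade.
Context {R : realType}.
Implicit Types (r a be b p x K : R).

Lemma measurable_levy_integrand p : measurable_fun setT (@levy_integrand R p).
Proof.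
apply: measurable_funB; first by apply: measurable_funB => //; exact: measurableT_comp.
by apply: measurable_fun_ifT => //; apply: measurable_fun_ler.
Qed.

Lemma levy_integrand_neq0 p x : p != 0 -> x != 0 -> levy_integrand p x != 0.
Proof.
move=> p0 x0; have px0 : p * x != 0 by rewrite mulf_neq0.
rewrite /levy_integrand; case: ifP => _.
  by rewrite gt_eqF //; have := expR_gt1Dx px0; lra.
by rewrite subr0 subr_eq0 -expR0 (inj_eq (@expR_inj R)).
Qed.

Lemma annihilator_levy_integrand be K x :
  annihilator be (fun j => levy_integrand (j%:R * K) x)
  = ((expR (K * x) - 1) * (expR (K * x) - be)) ^+ 2.
Proof.
have -> : (fun j => levy_integrand (j%:R * K) x) = fun j => expR (K * x) ^+ j
    + (- 1 + - (if `|x| <= 1 then K * x else 0) * j%:R + 0 * j%:R ^+ 2).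
  by apply: funext => j; rewrite /levy_integrand -mulrA expRM_natl; case: ifP => _; ring.
by rewrite annihilatorD annihilator_geometric annihilator_quadratic mulr0 mul0r addr0.
Qed.

Lemma sqr_expR_diff_eq0 K b x : K != 0 ->
  ((expR (K * x) - 1) * (expR (K * x) - expR (K * b))) ^+ 2 = 0 -> x = 0 \/ x = b.
Proof.
move=> K0 /eqP; rewrite sqrf_eq0 mulf_eq0 !subr_eq0 -[1]expR0 !(inj_eq (@expR_inj R)).
by rewrite mulf_eq0 (negbTE K0) (inj_eq (mulfI K0)) => /orP[] /eqP; [left|right].
Qed.

Lemma cvg_expRM_lt0 b : b < 0 -> expR (p * b) @[p --> +oo] --> (0 : R).
Proof.
move=> b0.
have -> : (fun p => expR (p * b)) = (fun x => expR (- x)) \o (fun p => p * - b).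
  by apply: funext => p /=; rewrite mulrN opprK.
apply: cvg_comp; last exact: cvgr_expR.
apply/cvgryPge => A; apply: filterS (nbhs_pinfty_ge (num_real (A / - b))) => p.
by rewrite -ler_pdivrMr ?oppr_gt0.
Qed.

Section scaled_dirac.
Context {nu : {measure set R -> \bar R}} {lam b : R}.
Hypothesis nu_dirac : forall A, measurable A -> nu A = (lam%:E * \d_b A)%E.

Lemma cgf_scaled_dirac a sigma2 p :
  cgf a sigma2 nu p = a * p + sigma2 * p ^+ 2 / 2 + lam * levy_integrand p b.
Proof.
rewrite /cgf (Rintegral_scaled_dirac nu (measurable_set1 b) _ nu_dirac) //.
exact: measurable_levy_integrand.
Qed.

Lemma incr_exp_scaled_dirac r k a : exists c, forall p,
  incr_exp r k a 0 nu p = c + lam * (expR (k%:R * b) - 1) / ln r * expR (p * b).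
Proof.
exists ((a * k%:R - lam * (if `|b| <= 1 then k%:R * b else 0)) / ln r) => p.
rewrite /incr_exp /zeta !cgf_scaled_dirac /levy_integrand.
by rewrite [(p + _) * b]mulrDl expRD; case: ifP => _; ring.
Qed.

Lemma A1_scaled_dirac r k a : 0 < r < 1 -> (0 < k)%N -> b < 0 -> 0 < lam ->
  exists beta dinf, 0 < beta < 1 /\ A1 r k a 0 nu beta dinf /\
    0 < intermittency_C r k a 0 nu beta dinf.
Proof.
move=> r01 k0 b0 lam0; have lnr0 : ln r < 0 by exact: ln_lt0.
set be := expR (k%:R * b); have be1 : be < 1 by rewrite expR_lt1 pmulr_rlt0 ?ltr0n.
have [c incrE] := incr_exp_scaled_dirac r k a.
exists be, c; split; first by rewrite expR_gt0.
split; [split|].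
- under eq_fun do rewrite incrE.
  apply: cvg_trans (cvgD (cvg_cst c) (cvgM (cvg_cst _) (cvg_expRM_lt0 _ b0))) _.
  by rewrite mulr0 addr0.
- by move=> n; rewrite !incrE [(_ + _) * b]mulrDl expRD -/be; ring.
rewrite /intermittency_C incrE mul0r expR0 mulr1 -/be addrAC subrr add0r.
have -> : lam * (be - 1) / ln r / (1 - be) = lam / - ln r.
  by field; rewrite lt_eqF // subr_eq0 eq_sym lt_eqF.
by rewrite divr_gt0 ?oppr_gt0.
Qed.

Lemma A1_intermittency_C_eq0 r k a be dinf : lam = 0 -> be != 1 ->
  A1 r k a 0 nu be dinf -> intermittency_C r k a 0 nu be dinf = 0.
Proof.
move=> lam0 be1 [_ rec]; have [c incrE] := incr_exp_scaled_dirac r k a.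
move: incrE; rewrite lam0 => incrE; have := rec 0%N.
rewrite /intermittency_C !incrE !mul0r !addr0 => c_rec.
have : (1 - be) * (c - dinf) = c - ((1 - be) * dinf + be * c) by ring.
rewrite -c_rec subrr.
by move/eqP; rewrite mulf_eq0 subr_eq0 eq_sym (negbTE be1) /= => /eqP ->; rewrite mul0r.
Qed.

End scaled_dirac.

Section nonnegative_orders.
Context (a sigma2 : R) {K : R} {nu : {measure set R -> \bar R}}.
Hypothesis K0 : 0 <= K.
Hypothesis int_levy : forall p, 0 <= p ->
  nu.-integrable setT (fun x => (levy_integrand p x)%:E).

Let int_levy_nat j : nu.-integrable setT (EFin \o levy_integrand (j%:R * K)).
Proof. exact/int_levy/mulr_ge0. Qed.

Lemma integrable_annihilator_levy_integrand be :
  nu.-integrable setT (fun x => (((expR (K * x) - 1) * (expR (K * x) - be)) ^+ 2)%:E).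
Proof.
apply: eq_integrable (integrable_lincomb nu measurableT
  (fun j : 'I_5 => annihilator_coef be j) (fun j => int_levy_nat j) (index_enum 'I_5)) => //.
by move=> x _ /=; rewrite -annihilator_levy_integrand.
Qed.

Lemma annihilator_cgf be :
  annihilator be (fun j => cgf a sigma2 nu (j%:R * K)) = sigma2 * K ^+ 2 * (1 - be) ^+ 2
    + Rintegral nu setT (fun x => ((expR (K * x) - 1) * (expR (K * x) - be)) ^+ 2).
Proof.
have -> : (fun j => cgf a sigma2 nu (j%:R * K)) = fun j =>
    0 + a * K * j%:R + sigma2 * K ^+ 2 / 2 * j%:R ^+ 2
    + Rintegral nu setT (levy_integrand (j%:R * K)).
  by apply: funext => j; rewrite /cgf; ring.
rewrite annihilatorD annihilator_quadratic; congr (_ + _); first by field.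
rewrite /annihilator -Rintegral_lincomb //.
by apply: eq_Rintegral => x _; rewrite -annihilator_levy_integrand.
Qed.

End nonnegative_orders.

Section A1_consequences.
Context {r : R} {k : nat} {a sigma2 : R} {nu : {measure set R -> \bar R}} {be dinf : R}.
Hypotheses (r01 : 0 < r < 1) (hA1 : A1 r k a sigma2 nu be dinf).

Lemma A1_annihilator_cgf : annihilator be (fun j => cgf a sigma2 nu (j%:R * k%:R)) = 0.
Proof.
have lnr0 : ln r != 0 by rewrite lt_eqF ?ln_lt0.
case: hA1 => _ rec; apply: (annihilator_affine_rec _ _ dinf _ lnr0) => n.
have incrE m : incr_exp r k a sigma2 nu (m * k)%:R
    = (cgf a sigma2 nu (m.+1%:R * k%:R) - cgf a sigma2 nu (m%:R * k%:R)) / ln r.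
  by rewrite /incr_exp /zeta mulrBl -natrD -mulSnr !natrM.
by rewrite -!incrE mulSnr natrD rec.
Qed.

Lemma A1_sigma2_eq0_ae : (0 < k)%N -> 0 <= sigma2 -> 0 < be < 1 -> nu [set 0] = 0%E ->
  (forall p, 0 <= p -> nu.-integrable setT (fun x => (levy_integrand p x)%:E)) ->
  sigma2 = 0 /\ exists2 b, b < 0 & {ae nu, forall x, x = b}.
Proof.
move=> k0 s0 /andP[be0 be1] nu0 int_levy.
pose K : R := k%:R; have K0 : 0 < K by rewrite ltr0n.
pose b := ln be / K; have Kb : expR (K * b) = be by rewrite mulrC divfK ?gt_eqF ?lnK.
pose G x := ((expR (K * x) - 1) * (expR (K * x) - be)) ^+ 2.
have G0 x : 0 <= G x by exact: sqr_ge0.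
have RG0 : 0 <= Rintegral nu setT G by apply: Rintegral_ge0 => x _; exact: G0.
have gauss0 : 0 <= sigma2 * K ^+ 2 * (1 - be) ^+ 2.
  by rewrite mulr_ge0 ?sqr_ge0 // mulr_ge0 ?sqr_ge0.
have sum0 : sigma2 * K ^+ 2 * (1 - be) ^+ 2 + Rintegral nu setT G = 0.
  by rewrite -(annihilator_cgf a sigma2 (ltW K0) int_levy) A1_annihilator_cgf.
have [gauss_eq0 RG_eq0] : sigma2 * K ^+ 2 * (1 - be) ^+ 2 = 0 /\ Rintegral nu setT G = 0.
  by split; lra.
split.
  have be1' : (1 - be == 0) = false by rewrite subr_eq0 eq_sym lt_eqF.
  by move/eqP: gauss_eq0; rewrite !mulf_eq0 (gt_eqF K0) be1' !orbF => /eqP.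
exists b; first by rewrite pmulr_llt0 ?invr_gt0 // ln_lt0 // be0.
have aeG := ae_eq0_Rintegral_ge0 nu G G0
  (integrable_annihilator_levy_integrand (ltW K0) int_levy be) RG_eq0.
have ae_neq0 : {ae nu, forall x, x != 0}.
  by exists [set 0]; split => // x /= /negP; rewrite negbK => /eqP.
apply: filterS2 aeG ae_neq0 => x; rewrite /G -Kb.
by move=> /(sqr_expR_diff_eq0 _ _ _ (lt0r_neq0 K0)) [->|//]; rewrite eqxx.
Qed.

End A1_consequences.

End levy_cascade.

Theorem mainTheorem2 (R : realType) (r : R) (k : nat) (a sigma2 : R)
    (nu : {measure set R -> \bar R}) :
  0 < r < 1 -> (1 <= k)%N -> 0 <= sigma2 -> is_levy_measure nu ->
  (forall p : R, 0 <= p ->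
     nu.-integrable setT (fun x => (levy_integrand p x)%:E)) ->
  ((exists beta dinf : R, 0 < beta < 1 /\ A1 r k a sigma2 nu beta dinf /\
       0 < intermittency_C r k a sigma2 nu beta dinf)
   <->
   (sigma2 = 0 /\ exists b lam : R, b < 0 /\ 0 < lam /\
       forall A : set R, measurable A -> nu A = (lam%:E * \d_b A)%E)).
Proof.
move=> r01 k0 s0 [nu0 _] int_levy; split; last first.
  by case=> -> [b [lam [b0 [lam0 nu_dirac]]]]; exact: (A1_scaled_dirac nu_dirac).
case=> be [dinf [be01 [hA1 C0]]].
have [s2 [b b0 ae_b]] := A1_sigma2_eq0_ae r01 hA1 k0 s0 be01 nu0 int_levy.
have K0 : (0 : R) < k%:R by rewrite ltr0n.
have nub_fin : nu [set b] \is a fin_num.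
  apply: (measure_set1_fin_num nu (measurable_set1 b) _ (int_levy _ (ltW K0))).
  by apply: levy_integrand_neq0; [exact: lt0r_neq0 | exact: ltr0_neq0].
pose lam := fine (nu [set b]).
have nu_dirac A : measurable A -> nu A = (lam%:E * \d_b A)%E.
  by move=> mA; rewrite fineK // (measure_ae_set1 nu (measurable_set1 b) ae_b).
split => //; exists b, lam; do 2!split => //.
rewrite lt_neqAle fine_ge0 ?measure_ge0 // andbT eq_sym.
apply: contraTneq C0 => lam0; move: hA1; rewrite s2 => hA1.
by rewrite (A1_intermittency_C_eq0 nu_dirac) ?ltxx ?lt_eqF //; case/andP: be01.
Qed.
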